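(* Let $f$ be a min-tradeoff function, let $\mathrm{rate}$ be a convex rate function, and let $\alpha\in(1,2)$. Then the optimisation $$\inf_{p\in\mathcal{Q}}\Big(\Delta(f,p)-(\alpha-1)V(f,p)-(\alpha-1)^2K_\alpha(f)\Big)$$ is a convex optimisation problem, i.e. $\mathcal{Q}$ is a convex set and the objective $p\mapsto \Delta(f,p)-(\alpha-1)V(f,p)-(\alpha-1)^2K_\alpha(f)$ is a convex function on $\mathcal{Q}$.
   Context: Fix finite alphabets $\mathcal{A},\mathcal{B},\mathcal{X}$ and a function $x:\mathcal{A}\times\mathcal{B}\to\mathcal{X}$; let $d_A=|\mathcal{A}|$. An EAT channel acting on a finite-dimensional system $R$ is a channel $\mathcal{M}(\rho)=\sum_{a,b}|a\rangle\langle a|_A\otimes|b\rangle\langle b|_B\otimes|x(a,b)\rangle\langle x(a,b)|_X\otimes\mathcal{M}^{ab}(\rho)$ with each $\mathcal{M}^{ab}$ completely positive, trace non-increasing, and $\sum_{ab}\mathcal{M}^{ab}$ trace preserving. $\mathcal{Q}$ is the set of distributions $q$ on $\mathcal{X}$ that arise as the distribution of the register $X$ of $\mathcal{M}(\omega_{RR'})$ for some EAT channel $\mathcal{M}$ on $R$ and state $\omega_{RR'}$ ($R'$ arbitrary finite-dimensional, untouched by $\mathcal{M}$); $\Gamma(q)$ is the set of such pairs achieving $q$. A rate function is a function $\mathrm{rate}:\mathcal{Q}\to\mathbb{R}$ with $\mathrm{rate}(q)\le\inf_{(\omega,\mathcal{M})\in\Gamma(q)}H(A|BR')_{\mathcal{M}(\omega)}$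 for all $q\in\mathcal{Q}$ (conditional von Neumann entropy); a min-tradeoff function $f$ is an affine rate function, extended affinely to all probability distributions on $\mathcal{X}$. Writing $\delta_x$ for the point distribution at $x$: $\Delta(f,p):=\mathrm{rate}(p)-f(p)$; $\mathrm{Var}_p(f):=\sum_x p(x)\big(f(\delta_x)-\sum_{y}p(y)f(\delta_y)\big)^2$; $V(f,p):=\frac{\ln 2}{2}\big(\log(1+2d_A^2)+\sqrt{2+\mathrm{Var}_p(f)}\big)^2$ ($\log$ is base 2); $\mathrm{Max}(f):=\max_{p}f(p)$ over all distributions $p$ on $\mathcal{X}$; $\mathrm{Min}_{\mathcal{Q}}(f):=\inf_{p\in\mathcal{Q}}f(p)$; and $K_\alpha(f):=\frac{1}{6(2-\alpha)^3\ln 2}2^{(\alpha-1)(\log d_A+\mathrm{Max}(f)-\mathrm{Min}_{\mathcal{Q}}(f))}\ln^3\big(2^{\log d_A+\mathrm{Max}(f)-\mathrm{Min}_{\mathcal{Q}}(f)}+e^2\big)$, a constant independent of $p$. *)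

From HB Require Import structures.
From mathcomp Require Import all_boot all_order all_algebra.
From mathcomp Require Import complex.
From mathcomp Require Import all_classical all_reals all_analysis.
From Stdlib Require Import ClassicalEpsilon.

Set Implicit Arguments.
Unset Strict Implicit.
Unset Printing Implicit Defensive.

Import Order.TTheory GRing.Theory Num.Theory.
Local Open Scope ring_scope.
Local Open Scope complex_scope.

Section EAT.

Variable R : realType.

(* Operators on a finite-dimensional Hilbert space C^I, I a finite index type *)
Definition Op (I : finType) := I -> I -> R[i].

Definition trace (I : finType) (rho : Op I) : R[i] := \sum_(i : I) rho i i.

Definition psd (I : finType) (rho : Op I) : Prop :=
  forall v : I -> R[i], 0 <= \sum_(i : I) \sum_(j : I) (v i)^* * rho i j * v j.

Definition density (I : finType) (rho : Op I) : Prop :=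
  psd rho /\ trace rho = 1.

Definition linear_map (I J : finType) (Phi : Op I -> Op J) : Prop :=
  forall (a : R[i]) (rho sigma : Op I),
    Phi (fun i i' => a * rho i i' + sigma i i') =
    (fun j j' => a * Phi rho j j' + Phi sigma j j').

(* Phi (x) id_K, applying Phi to the first tensor factor *)
Definition apply_first (I J K : finType) (Phi : Op I -> Op J) (rho : Op (I * K)%type)
  : Op (J * K)%type :=
  fun u v => Phi (fun i i' => rho (i, u.2) (i', v.2)) u.1 v.1.

Definition completely_positive (I J : finType) (Phi : Op I -> Op J) : Prop :=
  linear_map Phi /\
  forall (n : nat) (rho : Op (I * 'I_n)%type), psd rho -> psd (apply_first Phi rho).

Definition trace_nonincreasing (I J : finType) (Phi : Op I -> Op J) : Prop :=
  forall rho : Op I, psd rho -> trace (Phi rho) <= trace rho.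

Definition log2 (x : R) : R := ln x / ln 2.

Definition is_spectrum (I : finType) (rho : Op I) (lam : I -> R) : Prop :=
  exists U : Op I,
    (forall i j, \sum_(k : I) U i k * (U j k)^* = if i == j then 1 else 0) /\
    (forall i j, rho i j = \sum_(k : I) U i k * (lam k)%:C * (U j k)^*).

Definition spectrum (I : finType) (rho : Op I) : I -> R :=
  epsilon (inhabits (fun _ : I => 0)) (is_spectrum rho).

Definition vN_entropy (I : finType) (rho : Op I) : R :=
  - \sum_(i : I) spectrum rho i * log2 (spectrum rho i).

Definition distribution (X : finType) (p : X -> R) : Prop :=
  (forall x, 0 <= p x) /\ \sum_(x : X) p x = 1.

Definition mix (X : finType) (t : R) (p q : X -> R) : X -> R :=
  fun x => t * p x + (1 - t) * q x.

Definition point_distr (X : finType) (x : X) : X -> R :=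
  fun y => if y == x then 1 else 0.

Variables (A B X : finType) (xf : A -> B -> X) (dR : nat).

Definition EAT_channel (dO : nat) (M : A -> B -> Op 'I_dR -> Op 'I_dO) : Prop :=
  (forall a b, completely_positive (M a b) /\ trace_nonincreasing (M a b)) /\
  (forall rho : Op 'I_dR, \sum_(a : A) \sum_(b : B) trace (M a b rho) = trace rho).

(* the state M(omega_{RR'}) on registers A B X (output of M^{ab}) R' *)
Definition eat_output (dR' dO : nat) (M : A -> B -> Op 'I_dR -> Op 'I_dO)
  (omega : Op ('I_dR * 'I_dR')%type) : Op (((A * B) * X) * ('I_dO * 'I_dR'))%type :=
  fun u v =>
    if [&& u.1.1 == v.1.1, u.1.2 == xf u.1.1.1 u.1.1.2 & v.1.2 == xf v.1.1.1 v.1.1.2]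
    then apply_first (M u.1.1.1 u.1.1.2) omega u.2 v.2 else 0.

Definition distX (dR' dO : nat) (tau : Op (((A * B) * X) * ('I_dO * 'I_dR'))%type) (x : X)
  : R[i] :=
  \sum_(ab : (A * B)%type) \sum_(o : 'I_dO) \sum_(k : 'I_dR')
    tau ((ab, x), (o, k)) ((ab, x), (o, k)).

Definition marg_ABR' (dR' dO : nat) (tau : Op (((A * B) * X) * ('I_dO * 'I_dR'))%type)
  : Op ((A * B) * 'I_dR')%type :=
  fun u v => \sum_(x : X) \sum_(o : 'I_dO) tau ((u.1, x), (o, u.2)) ((v.1, x), (o, v.2)).

Definition marg_BR' (dR' : nat) (sigma : Op ((A * B) * 'I_dR')%type) : Op (B * 'I_dR')%type :=
  fun u v => \sum_(a : A) sigma ((a, u.1), u.2) ((a, v.1), v.2).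

Definition cond_entropy_A_BR' (dR' dO : nat)
  (tau : Op (((A * B) * X) * ('I_dO * 'I_dR'))%type) : R :=
  vN_entropy (marg_ABR' tau) - vN_entropy (marg_BR' (marg_ABR' tau)).

Definition in_Gamma (q : X -> R) (dR' dO : nat) (omega : Op ('I_dR * 'I_dR')%type)
  (M : A -> B -> Op 'I_dR -> Op 'I_dO) : Prop :=
  density omega /\ EAT_channel M /\
  forall x : X, (q x)%:C = distX (eat_output M omega) x.

Definition inQ (q : X -> R) : Prop :=
  exists (dR' dO : nat) (omega : Op ('I_dR * 'I_dR')%type)
         (M : A -> B -> Op 'I_dR -> Op 'I_dO), in_Gamma q omega M.

Definition is_rate_function (rate : (X -> R) -> R) : Prop :=
  forall q, inQ q ->
  forall (dR' dO : nat) (omega : Op ('I_dR * 'I_dR')%type)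
         (M : A -> B -> Op 'I_dR -> Op 'I_dO),
    in_Gamma q omega M -> rate q <= cond_entropy_A_BR' (eat_output M omega).

Definition affine_on_distributions (f : (X -> R) -> R) : Prop :=
  forall (p q : X -> R) (t : R), distribution p -> distribution q -> 0 <= t <= 1 ->
    f (mix t p q) = t * f p + (1 - t) * f q.

Definition min_tradeoff (f : (X -> R) -> R) : Prop :=
  is_rate_function f /\ affine_on_distributions f.

Definition convex_set_Q : Prop :=
  forall (p q : X -> R) (t : R), inQ p -> inQ q -> 0 <= t <= 1 -> inQ (mix t p q).

Definition convex_on_Q (g : (X -> R) -> R) : Prop :=
  forall (p q : X -> R) (t : R), inQ p -> inQ q -> 0 <= t <= 1 ->
    g (mix t p q) <= t * g p + (1 - t) * g q.

Definition dA : R := #|A|%:R.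

Definition Delta (rate f : (X -> R) -> R) (p : X -> R) : R := rate p - f p.

Definition Var (f : (X -> R) -> R) (p : X -> R) : R :=
  \sum_(x : X) p x * (f (point_distr x) - \sum_(y : X) p y * f (point_distr y)) ^+ 2.

Definition Vfun (f : (X -> R) -> R) (p : X -> R) : R :=
  ln 2 / 2 * (log2 (1 + 2 * dA ^+ 2) + Num.sqrt (2 + Var f p)) ^+ 2.

Definition Maxf (f : (X -> R) -> R) : R :=
  sup [set y | exists p, distribution p /\ y = f p].

Definition MinQ (f : (X -> R) -> R) : R :=
  inf [set y | exists p, inQ p /\ y = f p].

Definition Kalpha (alpha : R) (f : (X -> R) -> R) : R :=
  let D := log2 dA + Maxf f - MinQ f in
  (6 * (2 - alpha) ^+ 3 * ln 2)^-1 * (2 `^ ((alpha - 1) * D)) *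
  (ln (2 `^ D + expR 2)) ^+ 3.

Definition objective (rate f : (X -> R) -> R) (alpha : R) (p : X -> R) : R :=
  Delta rate f p - (alpha - 1) * Vfun f p - (alpha - 1) ^+ 2 * Kalpha alpha f.

End EAT.

(* The X-distribution of M(omega) is the image under x of the weights
   tr((M^{ab} (x) id)(omega)) on A * B, and conversely any weights c on A * B are
   realized by a channel; so Q is (as soon as it is nonempty) the set of images of distributions on A * B, a
   convex set.  In the objective, rate - f is convex minus affine and K_alpha is a
   constant; V(f, .) is concave because Var_p(f) is concave in p (the variance of a
   mixture dominates the mixture of variances) and s |-> (L + sqrt(2 + s))^2 is
   concave and nondecreasing, so -(alpha - 1) V(f, .) is convex. *)

From Pilot Require Import Defs.
From HB Require Import structures.
From mathcomp Require Import all_boot all_order all_algebra.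
From mathcomp Require Import complex.
From mathcomp Require Import all_classical all_reals all_analysis.
From mathcomp Require Import ring lra.

Set Implicit Arguments.
Unset Strict Implicit.
Unset Printing Implicit Defensive.

Import Order.TTheory GRing.Theory Num.Theory.
Local Open Scope ring_scope.
Local Open Scope complex_scope.

Lemma sqr_convex_comb_le (R : realFieldType) (t a b : R) : 0 <= t <= 1 ->
  (t * a + (1 - t) * b) ^+ 2 <= t * a ^+ 2 + (1 - t) * b ^+ 2.
Proof.
move=> /andP[t0 t1]; rewrite -subr_ge0.
have -> : t * a ^+ 2 + (1 - t) * b ^+ 2 - (t * a + (1 - t) * b) ^+ 2 =
          t * (1 - t) * (a - b) ^+ 2 by ring.
by rewrite mulr_ge0 ?sqr_ge0 // mulr_ge0 ?subr_ge0.
Qed.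

Lemma sqrD_convex_comb_le (R : realFieldType) (L t a b c : R) :
  0 <= L -> 0 <= t <= 1 -> 0 <= c ->
  t * a ^+ 2 + (1 - t) * b ^+ 2 <= c ^+ 2 ->
  t * (L + a) ^+ 2 + (1 - t) * (L + b) ^+ 2 <= (L + c) ^+ 2.
Proof.
move=> L0 t01 c0 le_c; set u := t * a + (1 - t) * b.
have le_uc : u <= c.
  have [u_le0 | u_gt0] := leP u 0; first exact: le_trans u_le0 c0.
  by rewrite -ler_sqr ?nnegrE ?(ltW u_gt0) // (le_trans (sqr_convex_comb_le a b t01) le_c).
rewrite -subr_ge0.
have -> : (L + c) ^+ 2 - (t * (L + a) ^+ 2 + (1 - t) * (L + b) ^+ 2) =
          2 * L * (c - u) + (c ^+ 2 - (t * a ^+ 2 + (1 - t) * b ^+ 2)) by rewrite /u; ring.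
by rewrite addr_ge0 ?subr_ge0 // mulr_ge0 ?subr_ge0 // mulr_ge0.
Qed.

Section Variance.
Variables (R : realType) (X : finType).
Implicit Types (p q F : X -> R) (f : (X -> R) -> R).

Lemma sum_mixM t p q F :
  \sum_x mix t p q x * F x = t * \sum_x p x * F x + (1 - t) * \sum_x q x * F x.
Proof. by rewrite !mulr_sumr -big_split; apply: eq_bigr => x _; rewrite /mix /=; ring. Qed.

Lemma distribution_mix t p q : Defs.distribution p -> Defs.distribution q -> 0 <= t <= 1 ->
  Defs.distribution (mix t p q).
Proof.
move=> [p0 p1] [q0 q1] /andP[t0 t1]; split=> [x|].
  by rewrite addr_ge0 // mulr_ge0 ?subr_ge0.
by rewrite /mix big_split /= -!mulr_sumr p1 q1 !mulr1 subrKC.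
Qed.

Lemma Var_expand f p : \sum_x p x = 1 ->
  Var f p = \sum_x p x * f (point_distr R x) ^+ 2 - (\sum_x p x * f (point_distr R x)) ^+ 2.
Proof.
move=> p1; rewrite /Var; set m := \sum_y p y * f (point_distr R y).
transitivity (\sum_x (p x * f (point_distr R x) ^+ 2 - (2 * m) * (p x * f (point_distr R x))
                     + m ^+ 2 * p x)).
  by apply: eq_bigr => x _; ring.
by rewrite !big_split /= -!mulr_sumr sumrN -mulr_sumr p1 -/m; ring.
Qed.

Lemma Var_ge0 f p : (forall x, 0 <= p x) -> 0 <= Var f p.
Proof. by move=> p0; apply: sumr_ge0 => x _; rewrite mulr_ge0 ?sqr_ge0. Qed.

(* The gap is the variance, with weights t and 1 - t, of the two means of f. *)
Lemma Var_concave f p q t : \sum_x p x = 1 -> \sum_x q x = 1 -> 0 <= t <= 1 ->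
  t * Var f p + (1 - t) * Var f q <= Var f (mix t p q).
Proof.
move=> p1 q1 t01.
have mix1 : \sum_x mix t p q x = 1.
  by rewrite /mix big_split /= -!mulr_sumr p1 q1 !mulr1 subrKC.
rewrite !Var_expand // !sum_mixM.
have := sqr_convex_comb_le (\sum_x p x * f (point_distr R x))
                           (\sum_x q x * f (point_distr R x)) t01.
lra.
Qed.

Lemma Vfun_concave (A : finType) f p q t :
  Defs.distribution p -> Defs.distribution q -> 0 <= t <= 1 ->
  t * Vfun A f p + (1 - t) * Vfun A f q <= Vfun A f (mix t p q).
Proof.
move=> p_distr q_distr t01; have [m0 m1] := distribution_mix p_distr q_distr t01.
case: p_distr q_distr => [p0 p1] [q0 q1].
have ln2_ge0 : 0 <= ln (2 : R) by rewrite ln_ge0 ?ler1n.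
rewrite /Vfun mulrCA [(1 - t) * _]mulrCA -mulrDr ler_wpM2l ?divr_ge0 //.
apply: sqrD_convex_comb_le => //; rewrite ?sqrtr_ge0 //.
  by rewrite divr_ge0 // ln_ge0 // lerDl mulr_ge0 ?sqr_ge0.
rewrite !sqr_sqrtr ?addr_ge0 ?Var_ge0 //.
have := Var_concave f p1 q1 t01; lra.
Qed.

End Variance.

Section Operators.
Variable R : realType.

Lemma psd_diag_ge0 (I : finType) (rho : Op R I) (i : I) : psd rho -> 0 <= rho i i.
Proof.
move=> /(_ (fun j => if j == i then 1 else 0)).
rewrite (bigD1 i) //= [X in _ + X]big1 => [|k /negbTE k_neq_i]; last first.
  by rewrite big1 // => l _; rewrite k_neq_i rmorph0 !mul0r.
rewrite addr0 (bigD1 i) //= big1 => [|l /negbTE l_neq_i]; last by rewrite l_neq_i mulr0.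
by rewrite eqxx rmorph1 mul1r mulr1 addr0.
Qed.

Lemma trace_psd_ge0 (I : finType) (rho : Op R I) : psd rho -> 0 <= trace rho.
Proof. by move=> rho_psd; apply: sumr_ge0 => i _; apply: psd_diag_ge0. Qed.

Lemma trace_apply_first (I J K : finType) (Phi : Op R I -> Op R J) (rho : Op R (I * K)%type) :
  trace (apply_first Phi rho) = \sum_(k : K) trace (Phi (fun i i' => rho (i, k) (i', k))).
Proof. by rewrite /trace exchange_big pair_bigA. Qed.

Definition scale_op (I : finType) (z : R[i]) (rho : Op R I) : Op R I := fun i j => z * rho i j.

Lemma trace_scale_op (I : finType) z (rho : Op R I) : trace (scale_op z rho) = z * trace rho.
Proof. by rewrite /trace mulr_sumr. Qed.

Lemma apply_first_scale_op (I K : finType) z (rho : Op R (I * K)%type) :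
  apply_first (scale_op z) rho = scale_op z rho.
Proof. by apply/funext => -[i k]; apply/funext => -[i' k']. Qed.

Lemma psd_scale_op (I : finType) z (rho : Op R I) : 0 <= z -> psd rho -> psd (scale_op z rho).
Proof.
move=> z_ge0 rho_psd v; rewrite [X in 0 <= X](_ : _ = z * \sum_i \sum_j (v i)^* * rho i j * v j).
  by rewrite mulr_ge0.
rewrite mulr_sumr; apply: eq_bigr => i _; rewrite mulr_sumr; apply: eq_bigr => j _.
by rewrite /scale_op mulrCA !mulrA.
Qed.

Lemma completely_positive_scale_op (I : finType) z :
  0 <= z -> completely_positive (@scale_op I z).
Proof.
move=> z_ge0; split=> [a rho sigma | n rho rho_psd].
  by apply/funext => i; apply/funext => j; rewrite /scale_op mulrDr mulrCA.
by rewrite apply_first_scale_op; apply: psd_scale_op.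
Qed.

Lemma trace_nonincreasing_scale_op (I : finType) z :
  0 <= z <= 1 -> trace_nonincreasing (@scale_op I z).
Proof.
move=> /andP[z_ge0 z_le1] rho rho_psd.
by rewrite trace_scale_op ler_piMl ?trace_psd_ge0.
Qed.

End Operators.

Section Realizability.
Variables (R : realType) (A B X : finType) (xf : A -> B -> X) (dR : nat).

Definition outcome_weight (dR' dO : nat) (M : A -> B -> Op R 'I_dR -> Op R 'I_dO)
  (omega : Op R ('I_dR * 'I_dR')%type) (ab : A * B) : R[i] :=
  trace (apply_first (M ab.1 ab.2) omega).

Lemma distX_eat_output (dR' dO : nat) (M : A -> B -> Op R 'I_dR -> Op R 'I_dO)
  (omega : Op R ('I_dR * 'I_dR')%type) (x : X) :
  distX (eat_output xf M omega) x = \sum_(ab | xf ab.1 ab.2 == x) outcome_weight M omega ab.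
Proof.
rewrite big_mkcond; apply: eq_bigr => ab _; rewrite /eat_output /= eqxx eq_sym /=.
case: eqP => _; last by rewrite big1 // => j _; rewrite big1.
by rewrite /outcome_weight /trace pair_bigA; apply: eq_bigr => -[j k].
Qed.

Section Channel.
Variables (dR' dO : nat) (M : A -> B -> Op R 'I_dR -> Op R 'I_dO).
Variable omega : Op R ('I_dR * 'I_dR')%type.
Hypothesis M_EAT : EAT_channel M.

Lemma outcome_weight_ge0 (ab : A * B) : psd omega -> 0 <= outcome_weight M omega ab.
Proof.
move=> omega_psd; apply: trace_psd_ge0.
by have [[_ M_cp] _] := M_EAT.1 ab.1 ab.2; apply: M_cp.
Qed.

Lemma sum_outcome_weight : \sum_ab outcome_weight M omega ab = trace omega.
Proof.
rewrite /outcome_weight; under eq_bigr do rewrite trace_apply_first.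
rewrite exchange_big /= [RHS](_ : _ = \sum_(k : 'I_dR') trace (fun i i' => omega (i, k) (i', k))).
  by apply: eq_bigr => k _; rewrite -M_EAT.2 (pair_bigA _ (fun a b => trace (M a b _))).
by rewrite /trace exchange_big pair_bigA; apply: eq_bigr => -[].
Qed.

End Channel.

Definition weights (c : A * B -> R[i]) : Prop := (forall ab, 0 <= c ab) /\ \sum_ab c ab = 1.

Lemma weights_le1 c ab : weights c -> c ab <= 1.
Proof. by move=> [c_ge0 <-]; rewrite (bigD1 ab) //= lerDl sumr_ge0. Qed.

Lemma weights_mix (c c' : A * B -> R[i]) (t : R) : weights c -> weights c' -> 0 <= t <= 1 ->
  weights (fun ab => t%:C * c ab + (1 - t)%:C * c' ab).
Proof.
move=> [c_ge0 c1] [c'_ge0 c'1] /andP[t0 t1]; split=> [ab|].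
  by rewrite addr_ge0 // mulr_ge0 ?ler0c ?subr_ge0.
by rewrite big_split /= -!mulr_sumr c1 c'1 !mulr1 -rmorphD /= subrKC.
Qed.

Lemma EAT_channel_scale_op (c : A * B -> R[i]) :
  weights c -> EAT_channel (fun a b => @scale_op R 'I_dR (c (a, b))).
Proof.
move=> c_weights; have [c_ge0 c1] := c_weights; split=> [a b | rho].
  split; first exact: completely_positive_scale_op.
  by apply: trace_nonincreasing_scale_op; rewrite c_ge0 weights_le1.
rewrite pair_bigA -[RHS]mul1r -c1 mulr_suml.
by apply: eq_bigr => -[a b] _; rewrite trace_scale_op.
Qed.

Definition realizable (p : X -> R) : Prop :=
  (exists dR' (omega : Op R ('I_dR * 'I_dR')%type), density omega) /\
  exists c, weights c /\ forall x, (p x)%:C = \sum_(ab | xf ab.1 ab.2 == x) c ab.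

Lemma inQ_realizable p : inQ xf dR p -> realizable p.
Proof.
move=> [dR' [dO [omega [M [omega_density [M_EAT p_eq]]]]]].
split; first by exists dR', omega.
exists (outcome_weight M omega); split.
  split=> [ab|]; first exact: outcome_weight_ge0 omega_density.1.
  by rewrite sum_outcome_weight // omega_density.2.
by move=> x; rewrite p_eq distX_eat_output.
Qed.

(* Weights c are realized by the channel rho |-> c(a, b) rho for every (a, b). *)
Lemma realizable_inQ p : realizable p -> inQ xf dR p.
Proof.
move=> [[dR' [omega omega_density]] [c [c_weights p_eq]]].
exists dR', dR, omega, (fun a b => scale_op (c (a, b))); split=> //.
split; first exact: EAT_channel_scale_op.
move=> x; rewrite p_eq distX_eat_output; apply: eq_bigr => -[a b] _.
by rewrite /outcome_weight apply_first_scale_op trace_scale_op omega_density.2 mulr1.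
Qed.

Lemma realizable_mix p q (t : R) : realizable p -> realizable q -> 0 <= t <= 1 ->
  realizable (mix t p q).
Proof.
move=> [state [c [c_weights p_eq]]] [_ [c' [c'_weights q_eq]]] t01.
split=> //; exists (fun ab => t%:C * c ab + (1 - t)%:C * c' ab).
split; first exact: weights_mix.
by move=> x; rewrite /mix rmorphD !rmorphM /= p_eq q_eq !mulr_sumr -big_split.
Qed.

Lemma realizable_distribution p : realizable p -> Defs.distribution p.
Proof.
move=> [_ [c [[c_ge0 c1] p_eq]]]; split=> [x|].
  by rewrite -ler0c p_eq sumr_ge0.
apply: complexI; rewrite rmorph_sum rmorph1 /=; under eq_bigr do rewrite p_eq.
by rewrite -c1 (partition_big (fun ab => xf ab.1 ab.2) predT).
Qed.

End Realizability.

Theorem mainTheorem3 (R : realType) (A B X : finType) (xf : A -> B -> X) (dR : nat)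
  (f rate : (X -> R) -> R) (alpha : R) :
  min_tradeoff xf dR f ->
  is_rate_function xf dR rate ->
  convex_on_Q xf dR rate ->
  1 < alpha < 2 ->
  convex_set_Q R xf dR /\ convex_on_Q xf dR (objective xf dR rate f alpha).
Proof.
move=> [_ f_affine] _ rate_convex /andP[alpha_gt1 _]; split.
  move=> p q t /inQ_realizable p_real /inQ_realizable q_real t01.
  exact/realizable_inQ/realizable_mix.
move=> p q t p_inQ q_inQ t01.
have p_distr := realizable_distribution (inQ_realizable p_inQ).
have q_distr := realizable_distribution (inQ_realizable q_inQ).
have := rate_convex p q t p_inQ q_inQ t01.
have := Vfun_concave A f p_distr q_distr t01.
rewrite /objective /Delta f_affine //.
have alpha1_ge0 : 0 <= alpha - 1 by rewrite subr_ge0 ltW.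
nra.
Qed.
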